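(* Let $p=5$. The function $n\mapsto F(n)/\omega(3)^n$ extends to an analytic function on $\mathbb{Z}_5$, namely $$x\mapsto \frac{2}{\sqrt5}\sinh_5\!\left(x\log_5\frac{\phi}{\omega(3)}\right);$$ that is, this series converges for all $x\in\mathbb{Z}_5$ and at every integer $n\ge0$ it equals $F(n)/\omega(3)^n$.
   Context: $F(n)$ is the Fibonacci sequence ($F(0)=0,F(1)=1,F(n+2)=F(n+1)+F(n)$). $K=\mathbb{Q}_5(\phi)$ with $\phi$ a root of $x^2-x-1$ and $\sqrt5:=2\phi-1$; $\pi=\sqrt5$ is a uniformizer and the residue field of $\mathcal O_K$ has $5$ elements. $\omega(3)$ is the unique $4$th root of unity in $\mathcal O_K$ congruent to $3$ modulo $\sqrt5$ (equivalently, the $4$th root of unity in $\mathbb{Z}_5$ congruent to $3$ mod $5$). $\log_5 y=\sum_{m\ge1}(-1)^{m+1}(y-1)^m/m$ is the $5$-adic logarithm, $\exp_5 y=\sum_{m\ge0}y^m/m!$, and $\sinh_5(y)=\frac{\exp_5(y)-\exp_5(-y)}{2}=\sum_{m\ge0}\frac{y^{2m+1}}{(2m+1)!}$. *)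

From mathcomp Require Import all_boot all_order all_algebra.
Set Implicit Arguments.
Unset Strict Implicit.
Unset Printing Implicit Defensive.
Import Order.TTheory GRing.Theory Num.Theory.
Local Open Scope ring_scope.

Fixpoint fib (n : nat) : nat :=
  match n with
  | 0 => 0
  | 1 => 1
  | (m.+1 as k).+1 => fib k + fib m
  end.

Section Valued.
Variables (R : realFieldType) (K : fieldType) (abs : K -> R).

Definition is_nonarch_abs : Prop :=
  [/\ forall x, 0 <= abs x,
      forall x, abs x = 0 <-> x = 0,
      forall x y, abs (x * y) = abs x * abs y
    & forall x y, abs (x + y) <= Num.max (abs x) (abs y)].

Definition cvg_to (u : nat -> K) (l : K) : Prop :=
  forall eps : R, 0 < eps -> exists N, forall n, (N <= n)%N -> abs (u n - l) < eps.

Definition cauchy_seq (u : nat -> K) : Prop :=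
  forall eps : R, 0 < eps -> exists N, forall m n, (N <= m)%N -> (N <= n)%N ->
    abs (u m - u n) < eps.

Definition complete_abs : Prop :=
  forall u, cauchy_seq u -> exists l, cvg_to u l.

Definition in_Z5 (x : K) : Prop :=
  forall eps : R, 0 < eps -> exists z : int, abs (x - z%:~R) < eps.

Definition log_partial (y : K) (N : nat) : K :=
  \sum_(1 <= m < N) (-1) ^+ m.+1 * (y - 1) ^+ m / m%:R.

Definition sinh_partial (y : K) (N : nat) : K :=
  \sum_(m < N) y ^+ (2 * m).+1 / ((2 * m).+1)`!%:R.

End Valued.

From mathcomp Require Import all_boot all_order all_algebra.
From mathcomp Require Import ring lra zify.
From Stdlib Require Import ClassicalEpsilon.
Import Order.TTheory GRing.Theory Num.Theory.
Set Implicit Arguments.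
Unset Strict Implicit.
Local Open Scope ring_scope.

(* Since |m!| >= 5^(-m/4) by Legendre's formula, the exponential series
   converges on the disc |z|^2 <= 1/5, where it is multiplicative; the
   logarithm series converges for |y - 1|^2 <= 1/5.  To see exp (log y) = y,
   compare log y with (y^(5^k) - 1)/5^k: this differs from a partial sum of the
   log series by at most 5^-k, and its exponential is within 5^-k of y because
   |u^5 - 1| = |u - 1|/5 for u near 1.
   Since omega = 3 = phi modulo sqrt 5, the point y = phi/omega is in that disc,
   so exp (n log y) = y^n.  As omega^2 = -1 we get 1 - phi = omega^2/phi, and
   Binet's formula becomes F(n)/omega^n = (y^n - y^-n)/sqrt 5
   = 2 sinh (n log y)/sqrt 5.
   The ordered field of values need not be archimedean, so 5^-k -> 0 has to be
   derived: an approximation q of omega in Q(phi) makes q^2 + 1 small, while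
   after clearing denominators q^2 + 1 becomes some a + b phi with a > 0, whose
   absolute value is at least that of its norm a^2 + ab - b^2, a nonzero
   integer (5 is not a square). *)

Lemma fib_binet (F : comRingType) (phi : F) n : phi ^+ 2 = phi + 1 ->
  phi ^+ n - (1 - phi) ^+ n = (2%:R * phi - 1) * (fib n)%:R.
Proof.
move=> hphi.
have hpsi : (1 - phi) ^+ 2 = (1 - phi) + 1.
  have -> : (1 - phi) ^+ 2 = (1 - phi) + 1 + (phi ^+ 2 - phi - 1) by ring.
  by rewrite hphi; ring.
have fibS (x : F) m : x ^+ 2 = x + 1 -> x ^+ m.+2 = x ^+ m.+1 + x ^+ m.
  by move=> hx; rewrite -(addn2 m) exprD hx mulrDr mulr1 exprS mulrC.
suff : (phi ^+ n - (1 - phi) ^+ n = (2%:R * phi - 1) * (fib n)%:R) /\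
  (phi ^+ n.+1 - (1 - phi) ^+ n.+1 = (2%:R * phi - 1) * (fib n.+1)%:R) by case.
elim: n => [|m [IH1 IH2]]; first by split; rewrite /= ?expr0 ?expr1; ring.
split => //; rewrite [fib _]/= natrD mulrDr -IH1 -IH2 (fibS _ _ hphi) (fibS _ _ hpsi); ring.
Qed.

Lemma sqrt5_sqr (F : comRingType) (phi : F) : phi ^+ 2 = phi + 1 ->
  (2%:R * phi - 1) ^+ 2 = 5%:R.
Proof.
move=> hphi; have e : phi ^+ 2 - phi - 1 = 0 by rewrite hphi; ring.
have -> : (2%:R * phi - 1) ^+ 2 = 5%:R + 4%:R * (phi ^+ 2 - phi - 1) by ring.
by rewrite e mulr0 addr0.
Qed.

Lemma fib_div_expr (F : fieldType) (phi omega : F) n : phi ^+ 2 = phi + 1 ->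
  omega ^+ 2 = -1 -> 2%:R * phi - 1 != 0 ->
  (fib n)%:R / omega ^+ n =
    ((phi / omega) ^+ n - ((phi / omega) ^+ n)^-1) / (2%:R * phi - 1).
Proof.
move=> hphi hom s0.
have p0 : phi != 0.
  by apply/eqP => p0; move: hphi; rewrite p0 expr0n /= add0r => /eqP; rewrite eq_sym oner_eq0.
have o0 : omega != 0.
  by apply/eqP => o0; move: hom; rewrite o0 expr0n /= => /eqP; rewrite eq_sym oppr_eq0 oner_eq0.
have psiE : 1 - phi = omega ^+ 2 / phi.
  by rewrite hom; apply: (mulIf p0); rewrite mulrBl mul1r divfK // -expr2 hphi; ring.
have -> : (fib n)%:R = (phi ^+ n - (1 - phi) ^+ n) / (2%:R * phi - 1).
  by rewrite fib_binet // mulrC mulKf.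
rewrite psiE !expr_div_n -exprM mulnC exprM.
have P0 : phi ^+ n != 0 by rewrite expf_neq0.
have W0 : omega ^+ n != 0 by rewrite expf_neq0.
by field; rewrite s0 P0 W0.
Qed.

Lemma norm_Zphi_neq0 (a b : int) : a != 0 -> a ^+ 2 + a * b - b ^+ 2 != 0.
Proof.
move=> a0; apply/eqP => M0.
have e4 : (2 * a + b) ^+ 2 = 5 * b ^+ 2.
  apply/eqP; rewrite -subr_eq0; apply/eqP.
  have e : (2 * a + b) ^+ 2 - 5 * b ^+ 2 = 4 * (a ^+ 2 + a * b - b ^+ 2) by ring.
  by rewrite e M0 mulr0.
have [b0|b0] := eqVneq b 0.
  move: M0; rewrite b0 mulr0 expr0n /= addr0 subr0 => /eqP; rewrite sqrf_eq0; exact/negP.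
have := congr1 absz e4; rewrite abszM !abszX /= => en.
have v0 : (0 < `|b|)%N by rewrite absz_gt0.
have en' : (`|(2 * a + b)%R| ^ 2 = 5 * `|b| ^ 2)%N by move: en; lia.
have u0 : (0 < `|(2 * a + b)%R|)%N.
  rewrite absz_gt0; apply/eqP => u; move: e4; rewrite u expr0n /= => /eqP.
  rewrite eq_sym mulf_eq0 sqrf_eq0 (negbTE b0) orbF //.
have := congr1 (logn 5) en'.
rewrite lognM ?expn_gt0 ?v0 // !lognX (logn_prime _ (isT : prime 5)) /=.
lia.
Qed.

Lemma Zphi_mul_conj (F : comRingType) (a b : int) (phi : F) : phi ^+ 2 = phi + 1 ->
  (a%:~R + b%:~R * phi) * (a%:~R + b%:~R - b%:~R * phi) = (a ^+ 2 + a * b - b ^+ 2)%:~R.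
Proof.
move=> hphi; have e : phi ^+ 2 - phi - 1 = 0 by rewrite hphi; ring.
apply/eqP; rewrite -subr_eq0; apply/eqP.
transitivity (- b%:~R ^+ 2 * (phi ^+ 2 - phi - 1)); last by rewrite e mulr0.
by rewrite !expr2 !(intrD, intrB, intrM); ring.
Qed.

Lemma Zphi_sqr_add1 (F : comRingType) (phi q : F) (A B D : int) : phi ^+ 2 = phi + 1 ->
  q * D%:~R = A%:~R + B%:~R * phi ->
  (q ^+ 2 + 1) * D%:~R ^+ 2 =
    (A ^+ 2 + B ^+ 2 + D ^+ 2)%:~R + (2 * A * B + B ^+ 2)%:~R * phi.
Proof.
move=> hphi hq; apply/eqP; rewrite -subr_eq0; apply/eqP.
have -> : (q ^+ 2 + 1) * D%:~R ^+ 2 = (q * D%:~R) ^+ 2 + D%:~R ^+ 2 by ring.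
rewrite hq.
have e : phi ^+ 2 - phi - 1 = 0 by rewrite hphi; ring.
transitivity (B%:~R ^+ 2 * (phi ^+ 2 - phi - 1)); last by rewrite e mulr0.
rewrite !expr2 !(intrD, intrM); ring.
Qed.

Section FiveAdic.
Variables (R : realFieldType) (K : fieldType) (abs : K -> R).
Hypothesis abs_ge0 : forall x, 0 <= abs x.
Hypothesis abs_eq0 : forall x, abs x = 0 <-> x = 0.
Hypothesis absM : forall x y, abs (x * y) = abs x * abs y.
Hypothesis abs_ultra : forall x y, abs (x + y) <= Num.max (abs x) (abs y).
Hypothesis abs5 : abs 5%:R = 5%:R^-1.

Lemma abs0 : abs 0 = 0.
Proof. by apply/abs_eq0. Qed.

Lemma abs1 : abs 1 = 1.
Proof.
have h : abs 1 = abs 1 * abs 1 by rewrite -absM mulr1.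
have nz : abs 1 != 0 by apply/eqP => /abs_eq0 /eqP; rewrite oner_eq0.
by apply: (mulIf nz); rewrite mul1r -h.
Qed.

Lemma absN1 : abs (-1) = 1.
Proof.
have h : abs (-1) * abs (-1) = 1 by rewrite -absM mulrNN mulr1 abs1.
by have := abs_ge0 (-1); nra.
Qed.

Lemma absN x : abs (- x) = abs x.
Proof. by rewrite -mulN1r absM absN1 mul1r. Qed.

Lemma abs_subC x y : abs (x - y) = abs (y - x).
Proof. by rewrite -absN opprB. Qed.

Lemma absX x n : abs (x ^+ n) = abs x ^+ n.
Proof. elim: n => [|n IH]; first by rewrite !expr0 abs1. by rewrite !exprS absM IH. Qed.

Lemma absV x : abs (x^-1) = (abs x)^-1.
Proof.
have [->|nz] := eqVneq x 0; first by rewrite invr0 abs0 invr0.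
have ne : abs x != 0 by apply/eqP => /abs_eq0; apply/eqP.
apply: (mulfI ne); rewrite -absM divff // abs1 divff //.
Qed.

Lemma abs_div x y : abs (x / y) = abs x / abs y.
Proof. by rewrite absM absV. Qed.

Lemma abs_add_le x y B : abs x <= B -> abs y <= B -> abs (x + y) <= B.
Proof. move=> h1 h2; apply: le_trans (abs_ultra x y) _; rewrite ge_max h1 h2 //. Qed.

Lemma abs_add_lt x y B : abs x < B -> abs y < B -> abs (x + y) < B.
Proof. move=> h1 h2; apply: le_lt_trans (abs_ultra x y) _; rewrite gt_max h1 h2 //. Qed.

Lemma abs_sub_le x y B : abs x <= B -> abs y <= B -> abs (x - y) <= B.
Proof. by move=> h1 h2; apply: abs_add_le; rewrite ?absN. Qed.

Lemma abs_sum_le (I : Type) (r : seq I) (P : pred I) (F : I -> K) B :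
  0 <= B -> (forall i, P i -> abs (F i) <= B) -> abs (\sum_(i <- r | P i) F i) <= B.
Proof.
move=> hB hF; apply: (big_ind (fun x => abs x <= B)) => //.
  by rewrite abs0.
by move=> x y; apply: abs_add_le.
Qed.

Lemma abs_sum_lt (I : Type) (r : seq I) (P : pred I) (F : I -> K) B :
  0 < B -> (forall i, P i -> abs (F i) < B) -> abs (\sum_(i <- r | P i) F i) < B.
Proof.
move=> hB hF; apply: (big_ind (fun x => abs x < B)) => //.
  by rewrite abs0.
by move=> x y; apply: abs_add_lt.
Qed.

Lemma abs_nat_le1 n : abs n%:R <= 1.
Proof.
elim: n => [|n IH]; first by rewrite abs0 ler01.
by rewrite -addn1 natrD; apply: abs_add_le => //; rewrite abs1.
Qed.

Lemma abs_int_le1 (z : int) : abs z%:~R <= 1.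
Proof. case: z => n; rewrite ?NegzE ?mulrNz ?absN; exact: abs_nat_le1. Qed.

Lemma abs_add_isosceles x y : abs y < abs x -> abs (x + y) = abs x.
Proof.
move=> h; apply/eqP; rewrite eq_le; apply/andP; split.
  by apply: le_trans (abs_ultra x y) _; rewrite ge_max lexx ltW.
have e : x = (x + y) + - y by rewrite addrK.
have := abs_ultra (x + y) (- y); rewrite -e absN.
rewrite le_max => /orP [//|]. by rewrite leNgt h.
Qed.

Definition c5 : R := 5%:R^-1.

Lemma c5_gt0 : 0 < c5. Proof. by rewrite /c5 invr_gt0 ltr0n. Qed.

Lemma c5_lt1 : c5 < 1. Proof. by rewrite /c5 invf_lt1 ?ltr0n // ltr1n. Qed.

Lemma c5_expn_le1 k : c5 ^+ k <= 1.
Proof. by apply: exprn_ile1; [exact: ltW c5_gt0|exact: ltW c5_lt1]. Qed.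

Definition small (z : K) : bool := abs z ^+ 2 <= c5.

Lemma small_abs_lt1 z : small z -> abs z < 1.
Proof. by rewrite /small => hz; have := c5_lt1; have := abs_ge0 z; rewrite expr2 in hz; nra. Qed.

Lemma abs_eq1_neq0 x : abs x = 1 -> x != 0.
Proof.
by move=> ax; apply/eqP => x0; move: ax; rewrite x0 abs0 => /eqP; rewrite eq_sym oner_eq0.
Qed.

Lemma small_sub1_abs y : small (y - 1) -> abs y = 1.
Proof. by move=> ht; rewrite -(subrK 1 y) addrC abs_add_isosceles abs1 ?small_abs_lt1. Qed.

Lemma small_le a b : abs a <= abs b -> small b -> small a.
Proof. by move=> h; apply: le_trans; apply: lerXn2r; rewrite ?nnegrE ?abs_ge0. Qed.

Lemma small0 : small 0.
Proof. by rewrite /small abs0 expr0n /= ltW ?c5_gt0. Qed.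

Lemma smallN z : small (- z) = small z.
Proof. by rewrite /small absN. Qed.

Lemma smallD a b : small a -> small b -> small (a + b).
Proof.
rewrite /small => ha hb.
apply: le_trans (_ : Num.max (abs a) (abs b) ^+ 2 <= c5); last by case: (leP (abs a) (abs b)).
by apply: lerXn2r; rewrite ?nnegrE ?abs_ultra ?le_max ?abs_ge0.
Qed.

Lemma abs_natmul_le n z : abs (n%:R * z) <= abs z.
Proof. rewrite absM -[X in _ <= X]mul1r; apply: ler_wpM2r; [exact: abs_ge0|exact: abs_nat_le1]. Qed.

Lemma abs_coprime5 m : coprime 5 m -> abs m%:R = 1.
Proof.
move=> cop; apply/eqP; rewrite eq_le abs_nat_le1 /=.
have [a _] := @Bezoutl 5 m isT; rewrite (eqP cop) => /dvdnP [k hk].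
have e : (1 : K) = (k * 5)%:R - a%:R * m%:R by rewrite -hk natrD natrM addrK.
have h5k : abs (k * 5)%:R < 1.
  rewrite natrM absM abs5 -/c5; have := c5_lt1; have := c5_gt0.
  by have := abs_nat_le1 k; have := abs_ge0 k%:R; nra.
have := abs_ultra (k * 5)%:R (- (a%:R * m%:R)); rewrite -e abs1 absN absM le_max.
case/orP => h; first by have := lt_le_trans h5k h; rewrite ltxx.
by have := abs_nat_le1 a; have := abs_ge0 m%:R; have := abs_ge0 a%:R; nra.
Qed.

Lemma abs_natE n : (0 < n)%N -> abs n%:R = c5 ^+ logn 5 n.
Proof.
move=> n0; have [m cop e] := @pfactor_coprime 5 n isT n0.
by rewrite {1}e natrM natrX absM absX abs_coprime5 // abs5 mul1r.
Qed.

Lemma four_mul_lt_expn5 v : (4 * v < 5 ^ v)%N.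
Proof. elim: v => [//|v IH]; rewrite expnS; lia. Qed.

Lemma logn5_lt n : (0 < n)%N -> (4 * logn 5 n < n)%N.
Proof.
move=> n0; have := dvdn_leq n0 (pfactor_dvdnn 5 n).
have := four_mul_lt_expn5 (logn 5 n); lia.
Qed.

Lemma sum_div_expn5_lt k n : (0 < n)%N -> (4 * \sum_(1 <= i < k) n %/ 5 ^ i < n)%N.
Proof.
elim: k n => [|k IH] n n0; first by rewrite big_geq.
case: k IH => [|k] IH; first by rewrite big_geq.
rewrite big_nat_recl //.
under eq_bigr => i _ do rewrite expnS divnMA.
have [q0|qp] := posnP (n %/ 5).
  rewrite expn1 q0 big1 => [|i _]; last by rewrite div0n.
  by rewrite addn0 muln0.
have := IH _ qp. have := leq_divM n 5. rewrite expn1 /=.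
have := divn_eq n 5; lia.
Qed.

Lemma logn5_fact_lt m : (0 < m)%N -> (4 * logn 5 m`! < m)%N.
Proof. move=> m0; rewrite logn_fact //; exact: sum_div_expn5_lt. Qed.

Lemma expr_le_c5_half a w : 0 <= a -> a ^+ 2 <= c5 -> a ^+ w <= c5 ^+ (w %/ 2).
Proof.
move=> a0 ha.
have a1 : a <= 1.
  have := c5_lt1; have : a ^+ 2 = a * a by rewrite expr2. nra.
apply: (@le_trans _ _ (a ^+ (2 * (w %/ 2)))).
  by apply: ler_wiXn2l => //; rewrite mulnC leq_divM.
rewrite exprM; apply: lerXn2r => //; rewrite ?nnegrE ?exprn_ge0 //.
exact: ltW c5_gt0.
Qed.

Lemma abs_expr_div_le (z d : K) k m v :
  small z -> abs d = c5 ^+ v -> (k <= m)%N -> (v <= (m - k) %/ 2)%N ->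
  abs (z ^+ m / d) <= abs z ^+ k * c5 ^+ ((m - k) %/ 2 - v).
Proof.
move=> hz hd km vm.
have cp : 0 < c5 ^+ v by rewrite exprn_gt0 // c5_gt0.
rewrite abs_div absX hd ler_pdivrMr // -mulrA -exprD subnK //.
have -> : abs z ^+ m = abs z ^+ k * abs z ^+ (m - k) by rewrite -exprD subnKC.
by apply: ler_wpM2l; rewrite ?exprn_ge0 //; apply: expr_le_c5_half.
Qed.

Lemma abs_fact m : abs (m`!)%:R = c5 ^+ logn 5 m`!.
Proof. by apply: abs_natE; rewrite fact_gt0. Qed.

Lemma natK_neq0 n : (0 < n)%N -> (n%:R : K) != 0.
Proof.
move=> n0; apply/eqP => /abs_eq0; rewrite abs_natE // => /eqP.
by rewrite expf_eq0 (negbTE (lt0r_neq0 c5_gt0)) andbF.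
Qed.

Lemma factK_neq0 m : ((m`!)%:R : K) != 0.
Proof. by apply: natK_neq0; rewrite fact_gt0. Qed.

Lemma abs_intE (z : int) : abs (z%:~R : K) = abs ((`|z|%N)%:R : K).
Proof. by case: z => n; rewrite // NegzE mulrNz absN. Qed.

Lemma abs_int_val (z : int) : z != 0 -> abs (z%:~R : K) = c5 ^+ logn 5 `|z|.
Proof. by move=> z0; rewrite abs_intE abs_natE // absz_gt0. Qed.

Lemma intK_neq0 (z : int) : z != 0 -> (z%:~R : K) != 0.
Proof.
move=> z0; apply/eqP => /abs_eq0; rewrite abs_int_val // => /eqP.
by rewrite expf_eq0 (negbTE (lt0r_neq0 c5_gt0)) andbF.
Qed.

Lemma abs_Zphi_ge (phi : K) (a b : int) : phi ^+ 2 = phi + 1 -> abs phi <= 1 -> a != 0 ->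
  exists k, c5 ^+ k <= abs (a%:~R + b%:~R * phi).
Proof.
move=> hphi aphi a0; exists (logn 5 `|(a ^+ 2 + a * b - b ^+ 2)%R|).
rewrite -abs_int_val ?norm_Zphi_neq0 // -(Zphi_mul_conj a b hphi) absM.
rewrite -[leRHS]mulr1; apply: ler_wpM2l; first exact: abs_ge0.
apply: abs_sub_le; first by apply: abs_add_le; apply: abs_int_le1.
by rewrite absM -[leRHS]mulr1; apply: ler_pM; rewrite ?abs_ge0 ?abs_int_le1.
Qed.

Lemma sqr_add1_near (omega q : K) : omega ^+ 2 = -1 -> abs omega <= 1 ->
  abs (omega - q) <= 1 -> abs (q ^+ 2 + 1) <= abs (omega - q).
Proof.
move=> hom ao dq; set d := omega - q.
have -> : q ^+ 2 + 1 = - (d * (2%:R * omega - d)) + (omega ^+ 2 + 1) by rewrite /d; ring.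
rewrite hom addNr addr0 absN absM -[X in _ <= X]mulr1.
apply: ler_wpM2l; first exact: abs_ge0.
apply: abs_sub_le => //; rewrite absM -[X in _ <= X]mulr1.
by apply: ler_pM; rewrite ?abs_ge0 ?abs_nat_le1.
Qed.

Lemma ratr_Zphi_clear (phi : K) (a b : rat) : exists A B D : int,
  D != 0 /\ (ratr a + ratr b * phi) * D%:~R = A%:~R + B%:~R * phi.
Proof.
exists (numq a * denq b), (numq b * denq a), (denq a * denq b); split.
  by rewrite mulf_neq0 ?denq_neq0.
have ha := intK_neq0 (denq_neq0 a); have hb := intK_neq0 (denq_neq0 b).
by rewrite /ratr !intrM; field; rewrite ha hb.
Qed.

Lemma c5_expn_small (phi omega : K) : phi ^+ 2 = phi + 1 -> abs phi <= 1 ->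
  omega ^+ 2 = -1 -> abs omega <= 1 ->
  (forall (y : K) (eps : R), 0 < eps ->
      exists a b : rat, abs (y - (ratr a + ratr b * phi)) < eps) ->
  forall eps : R, 0 < eps -> exists k, c5 ^+ k < eps.
Proof.
move=> hphi aphi hom aom hdense eps e0.
have min_gt0 : 0 < Num.min eps 1 by rewrite lt_min e0 ltr01.
have [a [b]] := hdense omega _ min_gt0.
rewrite lt_min => /andP [close_eps close1].
have [A [B [D [D0 hqD]]]] := ratr_Zphi_clear phi a b.
have X0 : (A ^+ 2 + B ^+ 2 + D ^+ 2 : int) != 0.
  rewrite lt0r_neq0 // ltr_wpDl ?addr_ge0 ?sqr_ge0 //.
  by rewrite exprn_even_gt0.
have [k hk] := abs_Zphi_ge (2 * A * B + B ^+ 2) hphi aphi X0.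
exists k; apply: le_lt_trans hk _.
rewrite -(Zphi_sqr_add1 hphi hqD) absM absX.
apply: le_lt_trans close_eps; apply: le_trans (sqr_add1_near hom aom (ltW close1)).
rewrite -[X in _ <= X]mulr1; apply: ler_wpM2l; first exact: abs_ge0.
by rewrite exprn_ile1 ?abs_ge0 ?abs_int_le1.
Qed.

Lemma abs_sqrt5_sqr (phi : K) : phi ^+ 2 = phi + 1 -> abs (2%:R * phi - 1) ^+ 2 = c5.
Proof. by move=> hphi; rewrite -absX sqrt5_sqr // abs5. Qed.

Lemma small_sqrt5 (phi : K) : phi ^+ 2 = phi + 1 -> small (2%:R * phi - 1).
Proof. by move=> hphi; rewrite /small abs_sqrt5_sqr // lexx. Qed.

Lemma small_phi_sub3 (phi : K) : phi ^+ 2 = phi + 1 -> small (phi - 3%:R).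
Proof.
move=> hphi; apply: small_le (small_sqrt5 hphi).
have -> : phi - 3%:R = (2%:R * phi - 1 - 5%:R) / 2%:R by field; apply: natK_neq0.
rewrite abs_div (@abs_coprime5 2) // divr1; apply: abs_sub_le => //.
have s1 := small_abs_lt1 (small_sqrt5 hphi); have s0 := abs_ge0 (2%:R * phi - 1).
by rewrite abs5 -/c5 -(abs_sqrt5_sqr hphi) expr2; nra.
Qed.

Lemma abs_near3 x : abs (x - 3%:R) < 1 -> abs x = 1.
Proof.
move=> h; have a3 : abs (3%:R : K) = 1 by apply: abs_coprime5.
have -> : x = 3%:R + (x - 3%:R) by ring.
by rewrite abs_add_isosceles a3 //; rewrite a3.
Qed.

Lemma omega_sqr (omega : K) : omega ^+ 4 = 1 -> abs (omega - 3%:R) < 1 -> omega ^+ 2 = -1.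
Proof.
move=> hom4 ho3.
have : (omega - 1) * (omega + 1) * (omega ^+ 2 + 1) = omega ^+ 4 - 1 by ring.
rewrite hom4 subrr => /eqP; rewrite !mulf_eq0 => /orP [/orP [] |] /eqP e.
- have o1 : omega = 1 by apply/eqP; rewrite -subr_eq0 e.
  have e3 : omega - 3%:R = - 2%:R by rewrite o1; ring.
  by move: ho3; rewrite e3 absN abs_coprime5 ?ltxx.
- have o1 : omega = -1 by apply/eqP; rewrite -subr_eq0 opprK e.
  have e3 : omega - 3%:R = - 4%:R by rewrite o1; ring.
  by move: ho3; rewrite e3 absN abs_coprime5 ?ltxx.
- by apply/eqP; rewrite -subr_eq0 opprK e.
Qed.

Lemma small_ratio_sub1 (phi omega : K) : abs omega = 1 ->
  small (phi - 3%:R) -> small (omega - 3%:R) -> small (phi / omega - 1).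
Proof.
move=> aom hp ho.
have o0 := abs_eq1_neq0 aom.
have -> : phi / omega - 1 = ((phi - 3%:R) - (omega - 3%:R)) / omega by field.
by apply: small_le (_ : _ <= abs ((phi - 3%:R) - (omega - 3%:R))) _;
  [rewrite abs_div aom divr1 | apply: smallD; rewrite ?smallN].
Qed.

Lemma omega_phi_facts (phi omega : K) : phi ^+ 2 = phi + 1 -> omega ^+ 4 = 1 ->
  abs (omega - 3%:R) <= abs (2%:R * phi - 1) ->
  [/\ omega ^+ 2 = -1, abs phi <= 1, abs omega <= 1 & small (phi / omega - 1)].
Proof.
move=> hphi hom4 ho3; have ho := small_le ho3 (small_sqrt5 hphi).
have hp := small_phi_sub3 hphi.
have aom := abs_near3 (small_abs_lt1 ho).
split; last exact: small_ratio_sub1.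
- exact: omega_sqr (small_abs_lt1 ho).
- by rewrite abs_near3 ?small_abs_lt1.
- by rewrite aom.
Qed.

(* Provided by [c5_expn_small] in the main theorem. *)
Hypothesis c5_vanishes : forall eps : R, 0 < eps -> exists k, c5 ^+ k < eps.
Hypothesis abs_complete : complete_abs abs.

Lemma c5_expn_lt_eventually eps : 0 < eps -> exists N, forall n, (N <= n)%N -> c5 ^+ n < eps.
Proof.
move=> e0; have [k hk] := c5_vanishes e0; exists k => n kn.
apply: le_lt_trans hk; apply: ler_wiXn2l => //; [exact: ltW c5_gt0|exact: ltW c5_lt1].
Qed.

Lemma abs_le_all_eq0 x : (forall eps, 0 < eps -> abs x <= eps) -> x = 0.
Proof.
move=> h; apply/abs_eq0; apply/eqP; rewrite eq_le abs_ge0 andbT leNgt; apply/negP => hx.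
by have := h _ (divr_gt0 hx (ltr0n R 2)); rewrite ler_pdivlMr ?ltr0n //; lra.
Qed.

Definition null_seq (u : nat -> K) : Prop :=
  forall eps : R, 0 < eps -> exists N, forall n, (N <= n)%N -> abs (u n) < eps.

Lemma cvg_unique u l l' : cvg_to abs u l -> cvg_to abs u l' -> l = l'.
Proof.
move=> h1 h2; apply/eqP; rewrite -subr_eq0; apply/eqP; apply: abs_le_all_eq0 => eps e0.
have [N1 H1] := h1 _ e0; have [N2 H2] := h2 _ e0; apply: ltW.
have -> : l - l' = - (u (maxn N1 N2) - l) + (u (maxn N1 N2) - l') by ring.
by apply: abs_add_lt; rewrite ?absN; [apply: H1|apply: H2]; lia.
Qed.

Lemma cvg_abs_le u l N0 B : cvg_to abs u l -> (forall n, (N0 <= n)%N -> abs (u n) <= B) ->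
  abs l <= B.
Proof.
move=> h hB; rewrite leNgt; apply/negP => lB.
have B0 : 0 <= B by apply: le_trans (hB N0 (leqnn _)).
have [N HN] := h (abs l) (le_lt_trans B0 lB).
have e : l = u (maxn N N0) + - (u (maxn N N0) - l) by ring.
have h1 := HN (maxn N N0) (leq_maxl _ _).
have h2 := hB (maxn N N0) (leq_maxr _ _).
have := abs_ultra (u (maxn N N0)) (- (u (maxn N N0) - l)); rewrite -e absN.
rewrite le_max => /orP [h3|h3]; lra.
Qed.

Lemma cvg_cst a : cvg_to abs (fun _ => a) a.
Proof. by move=> eps e0; exists 0%N => n _; rewrite subrr abs0. Qed.

Lemma cvgD u v l l' : cvg_to abs u l -> cvg_to abs v l' ->
  cvg_to abs (fun n => u n + v n) (l + l').
Proof.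
move=> h1 h2 eps e0; have [N1 H1] := h1 _ e0; have [N2 H2] := h2 _ e0.
exists (maxn N1 N2) => n hn.
have e : u n + v n - (l + l') = (u n - l) + (v n - l') by ring.
rewrite e; apply: abs_add_lt; [apply: H1|apply: H2]; lia.
Qed.

Lemma cvgN u l : cvg_to abs u l -> cvg_to abs (fun n => - u n) (- l).
Proof.
move=> h eps e0; have [N H] := h _ e0; exists N => n hn.
by rewrite -opprD absN; apply: H.
Qed.

Lemma cvg_eq_eventually u v l N0 : (forall n, (N0 <= n)%N -> u n = v n) ->
  cvg_to abs u l -> cvg_to abs v l.
Proof.
move=> e h eps e0; have [N H] := h _ e0; exists (maxn N N0) => n hn.
rewrite -e; [apply: H|]; lia.
Qed.

Lemma cvg_subseq u l (f : nat -> nat) : (forall n, (n <= f n)%N) ->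
  cvg_to abs u l -> cvg_to abs (fun n => u (f n)) l.
Proof.
move=> hf h eps e0; have [N H] := h _ e0; exists N => n hn.
by apply: H; apply: leq_trans hn (hf n).
Qed.

Lemma cvg_bounded u l : cvg_to abs u l ->
  exists N M, forall n, (N <= n)%N -> abs (u n) <= M.
Proof.
move=> h; have [N H] := h 1 ltr01; exists N, (Num.max (abs l) 1) => n hn.
have e : u n = (u n - l) + l by ring.
rewrite e; apply: abs_add_le; rewrite le_max ?lexx ?orbT //.
by rewrite (ltW (H n hn)) orbT.
Qed.

Lemma cvgM u v l l' : cvg_to abs u l -> cvg_to abs v l' ->
  cvg_to abs (fun n => u n * v n) (l * l').
Proof.
move=> h1 h2 eps e0.
have [N0 [M HM]] := cvg_bounded h1.
set M' := Num.max M (Num.max (abs l') 1).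
have M'0 : 0 < M' by rewrite !lt_max ltr01 !orbT.
have ee : 0 < eps / M' by rewrite divr_gt0.
have [N1 H1] := h1 _ ee; have [N2 H2] := h2 _ ee.
exists (maxn N0 (maxn N1 N2)) => n hn.
have e : u n * v n - l * l' = u n * (v n - l') + (u n - l) * l' by ring.
have hM : M <= M' by rewrite le_max lexx.
have hl' : abs l' <= M' by rewrite !le_max lexx !orbT.
rewrite e; apply: abs_add_lt; rewrite absM.
  have a1 : abs (u n) <= M' by apply: le_trans (HM n _) hM; lia.
  have a2 : abs (v n - l') < eps / M' by apply: H2; lia.
  have := abs_ge0 (u n); have := abs_ge0 (v n - l').
  move: a2; rewrite ltr_pdivlMr // => a2 ? ?.
  apply: le_lt_trans a2; rewrite mulrC; by apply: ler_wpM2l.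
have a2 : abs (u n - l) < eps / M' by apply: H1; lia.
move: a2; rewrite ltr_pdivlMr // => a2.
apply: le_lt_trans a2; apply: ler_wpM2l => //.
Qed.

Lemma cvg_diff0 u v l : cvg_to abs u l -> null_seq (fun n => u n - v n) -> cvg_to abs v l.
Proof.
move=> h hd eps e0; have [N1 H1] := h _ e0; have [N2 H2] := hd _ e0.
exists (maxn N1 N2) => n hn.
have -> : v n - l = - (u n - v n) + (u n - l) by ring.
by apply: abs_add_lt; rewrite ?absN; [apply: H2|apply: H1]; lia.
Qed.

Lemma null_of_bound (a : nat -> K) (g : nat -> nat) M0 :
  (forall n, exists M, forall m, (M <= m)%N -> (n <= g m)%N) ->
  (forall m, (M0 <= m)%N -> abs (a m) <= c5 ^+ g m) -> null_seq a.
Proof.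
move=> hg ha eps e0; have [n Hn] := c5_expn_lt_eventually e0; have [M HM] := hg n.
exists (maxn M M0) => m hm; apply: le_lt_trans (ha m _) _; first lia.
by apply: Hn; apply: HM; lia.
Qed.

Section Series.
Variables (P a : nat -> K).
Hypothesis partialS : forall n, P n.+1 = P n + a n.

Lemma partial_sum_diff_lt eps m : (forall i, (m <= i)%N -> abs (a i) < eps) -> 0 < eps ->
  forall k, abs (P (m + k)%N - P m) < eps.
Proof.
move=> ha e0; elim => [|k IH]; first by rewrite addn0 subrr abs0.
have -> : P (m + k.+1)%N - P m = (P (m + k)%N - P m) + a (m + k)%N by rewrite addnS partialS; ring.
by apply: abs_add_lt => //; apply: ha; lia.
Qed.

Lemma series_cvg : null_seq a -> exists l, cvg_to abs P l.
Proof.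
move=> ha; apply: abs_complete => eps e0.
have [N HN] := ha _ e0; exists N => m n hm hn.
have [mn|nm] := leqP m n.
  rewrite abs_subC -(subnKC mn); apply: partial_sum_diff_lt => // i hi; apply: HN; lia.
rewrite -(subnKC (ltnW nm)); apply: partial_sum_diff_lt => // i hi; apply: HN; lia.
Qed.

Lemma partial_sum_abs_le x B N0 :
  abs (P N0 - x) <= B -> (forall n, (N0 <= n)%N -> abs (a n) <= B) ->
  forall n, (N0 <= n)%N -> abs (P n - x) <= B.
Proof.
move=> h0 ha; elim => [|n IH] hn; first by move: h0; have -> : N0 = 0%N by lia.
have [e|lt] := eqVneq N0 n.+1; first by rewrite -e.
have -> : P n.+1 - x = (P n - x) + a n by rewrite partialS; ring.
by apply: abs_add_le; [apply: IH|apply: ha]; lia.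
Qed.

Lemma series_lim_abs_le x B N0 l :
  abs (P N0 - x) <= B -> (forall n, (N0 <= n)%N -> abs (a n) <= B) ->
  cvg_to abs P l -> abs (l - x) <= B.
Proof.
move=> h0 ha hl; apply: (@cvg_abs_le (fun n => P n - x) _ N0).
  exact: (cvgD hl (cvg_cst (- x))).
exact: partial_sum_abs_le h0 ha.
Qed.

Lemma series_tail_le l M B : 0 <= B -> (forall n, (M <= n)%N -> abs (a n) <= B) ->
  cvg_to abs P l -> abs (P M - l) <= B.
Proof.
move=> B0 ha hl; rewrite abs_subC.
by apply: series_lim_abs_le ha hl; rewrite subrr abs0.
Qed.

End Series.

Lemma sum_cauchy_prod_eq (f g : nat -> K) N :
  \sum_(m < N) \sum_(i < m.+1) f i * g (m - i)%N =
  \sum_(i < N) f i * \sum_(j < N - i) g j.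
Proof.
elim: N => [|N IH]; first by rewrite !big_ord0.
rewrite big_ord_recr /= IH.
transitivity (\sum_(i < N.+1) f i * \sum_(j < N - i) g j + \sum_(i < N.+1) f i * g (N - i)%N).
  congr (_ + _); by rewrite big_ord_recr /= subnn big_ord0 mulr0 addr0.
rewrite -big_split /=; apply: eq_bigr => i _.
have hi : (N.+1 - i = (N - i).+1)%N by have := ltn_ord i; lia.
by rewrite hi big_ord_recr /= mulrDr.
Qed.

Lemma prod_sum_diff (f g : nat -> K) N :
  (\sum_(i < N) f i) * (\sum_(j < N) g j) - \sum_(i < N) f i * \sum_(j < N - i) g j =
  \sum_(i < N) f i * \sum_(N - i <= j < N) g j.
Proof.
rewrite big_distrl /= -sumrB; apply: eq_bigr => i _.
rewrite -mulrBr; congr (_ * _).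
rewrite -!(big_mkord xpredT g) (@big_cat_nat _ _ _ (N - i)) //= ?leq_subr //; ring.
Qed.

Lemma cvg_cauchy_prod (f g : nat -> K) A B :
  (forall i, abs (f i) <= 1) -> (forall j, abs (g j) <= 1) -> null_seq f -> null_seq g ->
  cvg_to abs (fun N => \sum_(i < N) f i) A -> cvg_to abs (fun N => \sum_(j < N) g j) B ->
  cvg_to abs (fun N => \sum_(m < N) \sum_(i < m.+1) f i * g (m - i)%N) (A * B).
Proof.
move=> f1 g1 f0 g0 hA hB.
apply: cvg_diff0 (cvgM hA hB) _ => eps e0.
have [Nf Hf] := f0 _ e0; have [Ng Hg] := g0 _ e0.
exists (2 * (maxn Nf Ng)).+2 => n hn.
rewrite sum_cauchy_prod_eq prod_sum_diff; apply: abs_sum_lt => // i _; rewrite absM.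
have hin : abs (\sum_(n - i <= j < n) g j) <= 1 by apply: abs_sum_le => //; rewrite ler01.
have [hi|hi] := leqP Nf i.
  have := Hf i hi; have := abs_ge0 (f i); have := abs_ge0 (\sum_(n - i <= j < n) g j); nra.
have hsm : abs (\sum_(n - i <= j < n) g j) < eps.
  rewrite big_nat_cond; apply: abs_sum_lt => // j /andP [/andP [j1 j2] _].
  apply: Hg; have := ltn_ord i; lia.
have := f1 i; have := abs_ge0 (f i); have := abs_ge0 (\sum_(n - i <= j < n) g j); nra.
Qed.
Definition exp_term (z : K) (m : nat) : K := z ^+ m / (m`!)%:R.

Definition exp_partial (z : K) (N : nat) : K := \sum_(m < N) exp_term z m.

Lemma exp_partialS z N : exp_partial z N.+1 = exp_partial z N + exp_term z N.
Proof. by rewrite /exp_partial big_ord_recr. Qed.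

Lemma exp_partial0 z : exp_partial z 0 = 0.
Proof. by rewrite /exp_partial big_ord0. Qed.

Lemma exp_partial1 z : exp_partial z 1 = 1.
Proof. by rewrite exp_partialS exp_partial0 add0r /exp_term expr0 fact0 divr1. Qed.

Lemma exp_partial2 z : exp_partial z 2 = 1 + z.
Proof. by rewrite exp_partialS exp_partial1 /exp_term expr1 divr1. Qed.

Lemma exp_term_bound z k m : small z -> (k <= 2)%N -> (k <= m)%N ->
  abs (exp_term z m) <= abs z ^+ k * c5 ^+ ((m - k) %/ 2 - logn 5 m`!).
Proof.
move=> hz k2 km; apply: abs_expr_div_le => //; first exact: abs_fact.
have [->|mp] := posnP m; first by rewrite fact0 logn1.
by have := logn5_fact_lt mp; lia.
Qed.

Lemma exp_term_le z k m : small z -> (k <= 2)%N -> (k <= m)%N ->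
  abs (exp_term z m) <= abs z ^+ k.
Proof.
move=> hz k2 km; apply: le_trans (exp_term_bound hz k2 km) _.
by rewrite ler_piMr ?exprn_ge0 ?c5_expn_le1.
Qed.

Lemma exp_term_le1 z : small z -> forall m, abs (exp_term z m) <= 1.
Proof. by move=> hz m; rewrite -(expr0 (abs z)); apply: exp_term_le. Qed.

Lemma exp_term_null z : small z -> null_seq (exp_term z).
Proof.
move=> hz; apply: (@null_of_bound _ (fun m => (m %/ 2 - logn 5 m`!)%N) 1).
  move=> n; exists (4 * n + 4)%N => m hm.
  by have := @logn5_fact_lt m (ltac:(lia)); lia.
move=> m _; have := exp_term_bound hz (isT : (0 <= 2)%N) (leq0n m).
by rewrite expr0 mul1r subn0.
Qed.

Definition expK (z : K) : K :=
  epsilon (inhabits 0) (fun l => cvg_to abs (exp_partial z) l).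

Lemma expK_cvg z : small z -> cvg_to abs (exp_partial z) (expK z).
Proof.
move=> hz; apply: epsilon_spec.
exact: series_cvg (exp_partialS z) (exp_term_null hz).
Qed.

Lemma expK_sub1_le z : small z -> abs (expK z - 1) <= abs z.
Proof.
move=> hz; apply: (series_lim_abs_le (exp_partialS z) (N0 := 1%N)) (expK_cvg hz).
  by rewrite exp_partial1 subrr abs0.
by move=> n hn; rewrite -[abs z]expr1; apply: exp_term_le.
Qed.

Lemma expK_sub_lin_le z : small z -> abs (expK z - (1 + z)) <= abs z ^+ 2.
Proof.
move=> hz; apply: (series_lim_abs_le (exp_partialS z) (N0 := 2%N)) (expK_cvg hz).
  by rewrite exp_partial2 subrr abs0 exprn_ge0.
by move=> n hn; apply: exp_term_le.
Qed.

Lemma exp_term_lipschitz a b m : small a -> small b ->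
  abs (exp_term a m - exp_term b m) <= abs (a - b).
Proof.
move=> ha hb; set M := Num.max (abs a) (abs b).
have M0 : 0 <= M by rewrite le_max abs_ge0.
have hM : M ^+ 2 <= c5 by rewrite /M; case: (leP (abs a) (abs b)).
have -> : exp_term a m - exp_term b m =
    (a - b) * ((\sum_(i < m) a ^+ (m.-1 - i) * b ^+ i) / (m`!)%:R).
  by rewrite /exp_term -mulrBl subrXX mulrA.
rewrite absM -[X in _ <= X]mulr1; apply: ler_wpM2l; first exact: abs_ge0.
have hS : abs (\sum_(i < m) a ^+ (m.-1 - i) * b ^+ i) <= M ^+ m.-1.
  apply: abs_sum_le => [|i _]; first by rewrite exprn_ge0.
  rewrite absM !absX.
  have -> : M ^+ m.-1 = M ^+ (m.-1 - i) * M ^+ i.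
    by rewrite -exprD subnK //; have := ltn_ord i; lia.
  by apply: ler_pM; rewrite ?exprn_ge0 ?abs_ge0 //; apply: lerXn2r;
    rewrite ?nnegrE ?abs_ge0 // le_max lexx ?orbT.
have hv : (logn 5 m`! <= m.-1 %/ 2)%N.
  have [->|mp] := posnP m; first by rewrite fact0 logn1.
  by have := logn5_fact_lt mp; lia.
rewrite abs_div abs_fact ler_pdivrMr ?exprn_gt0 ?c5_gt0 // mul1r.
apply: le_trans hS _; apply: le_trans (expr_le_c5_half _ M0 hM) _.
by apply: ler_wiXn2l => //; [exact: ltW c5_gt0|exact: ltW c5_lt1].
Qed.

Lemma expK_lipschitz a b : small a -> small b -> abs (expK a - expK b) <= abs (a - b).
Proof.
move=> ha hb; rewrite -[expK a - expK b]subr0.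
have partialS n : exp_partial a n.+1 - exp_partial b n.+1 =
    exp_partial a n - exp_partial b n + (exp_term a n - exp_term b n).
  by rewrite !exp_partialS; ring.
apply: (series_lim_abs_le partialS (N0 := 0%N)).
- by rewrite !exp_partial0 !subrr abs0 abs_ge0.
- by move=> n _; apply: exp_term_lipschitz.
- exact: cvgD (expK_cvg ha) (cvgN (expK_cvg hb)).
Qed.

Lemma exp_termD a b m :
  exp_term (a + b) m = \sum_(i < m.+1) exp_term a i * exp_term b (m - i)%N.
Proof.
rewrite /exp_term addrC exprDn big_distrl /=; apply: eq_bigr => i _.
have im : (i <= m)%N by have := ltn_ord i; lia.
have eK : ((m`!)%:R : K) = ('C(m, i))%:R * ((i`!)%:R * ((m - i)`!)%:R).
  by rewrite -(bin_fact im) !natrM.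
have cnz : (('C(m, i))%:R : K) != 0 by apply: natK_neq0; rewrite bin_gt0.
have h1 := factK_neq0 i; have h2 := factK_neq0 (m - i).
by rewrite eK -mulr_natr; field; rewrite cnz h1 h2.
Qed.

Lemma expKD a b : small a -> small b -> expK (a + b) = expK a * expK b.
Proof.
move=> ha hb; apply: (cvg_unique (expK_cvg (smallD ha hb))).
apply: (cvg_eq_eventually (N0 := 0%N) _ (cvg_cauchy_prod (exp_term_le1 ha)
  (exp_term_le1 hb) (exp_term_null ha) (exp_term_null hb) (expK_cvg ha) (expK_cvg hb))).
by move=> n _; apply: eq_bigr => m _; rewrite exp_termD.
Qed.

Lemma expK0 : expK 0 = 1.
Proof.
apply: (cvg_unique (expK_cvg small0)).
apply: (cvg_eq_eventually (N0 := 1%N)) (cvg_cst 1).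
case=> [//|n] _; elim: n => [|n IH]; first by rewrite exp_partial1.
by rewrite exp_partialS -IH /exp_term expr0n /= mul0r addr0.
Qed.

Lemma expKMn n z : small z -> expK (n%:R * z) = expK z ^+ n.
Proof.
move=> hz; elim: n => [|n IH]; first by rewrite mul0r expK0 expr0.
rewrite -addn1 natrD mulrDl mul1r expKD ?IH ?exprD ?expr1 //.
exact: small_le (abs_natmul_le n z) hz.
Qed.

Lemma expKN_mul z : small z -> expK (- z) * expK z = 1.
Proof. by move=> hz; rewrite -expKD ?smallN // addNr expK0. Qed.

Definition log_term (y : K) (m : nat) : K := (-1) ^+ m.+1 * (y - 1) ^+ m / m%:R.

Lemma log_partialS y N : log_partial y N.+1 = log_partial y N + log_term y N.
Proof.
rewrite /log_partial; case: N => [|N]; last by rewrite big_nat_recr.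
by rewrite !big_geq // /log_term expr0 invr0 mulr0 add0r.
Qed.

Lemma abs_sign m : abs ((-1) ^+ m) = 1.
Proof. by rewrite absX absN1 expr1n. Qed.

Lemma log_term_bound y m : small (y - 1) -> (1 <= m)%N ->
  abs (log_term y m) <= abs (y - 1) * c5 ^+ ((m - 1) %/ 2 - logn 5 m).
Proof.
move=> ht m1; rewrite /log_term -mulrA absM abs_sign mul1r -[abs (y - 1)]expr1.
apply: abs_expr_div_le => //; first exact: abs_natE.
by have := logn5_lt m1; lia.
Qed.

Lemma log_term_le y m : small (y - 1) -> abs (log_term y m) <= abs (y - 1).
Proof.
move=> ht; have [->|mp] := posnP m; first by rewrite /log_term invr0 mulr0 abs0 abs_ge0.
by apply: le_trans (log_term_bound ht mp) _; rewrite ler_piMr ?abs_ge0 ?c5_expn_le1.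
Qed.

Lemma log_term_null y : small (y - 1) -> null_seq (log_term y).
Proof.
move=> ht; apply: (@null_of_bound _ (fun m => ((m - 1) %/ 2 - logn 5 m)%N) 1).
  move=> n; exists (4 * n + 4)%N => m hm.
  by have := @logn5_lt m (ltac:(lia)); lia.
move=> m hm; apply: le_trans (log_term_bound ht hm) _.
by rewrite ler_piMl ?exprn_ge0 ?ltW ?c5_gt0 ?small_abs_lt1.
Qed.

Lemma log_series_cvg y : small (y - 1) -> exists L, cvg_to abs (log_partial y) L.
Proof. by move=> ht; apply: series_cvg (log_partialS y) (log_term_null ht). Qed.

Lemma log_lim_le y L : small (y - 1) -> cvg_to abs (log_partial y) L ->
  abs L <= abs (y - 1).
Proof.
move=> ht hL; rewrite -[L]subr0.
apply: (series_lim_abs_le (log_partialS y) (N0 := 0%N)) hL.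
  by rewrite /log_partial big_geq // subrr abs0 abs_ge0.
by move=> n _; apply: log_term_le.
Qed.

Lemma abs_ffact_pred_sub N j : (j < N)%N ->
  abs (((N.-1) ^_ j)%:R - (-1) ^+ j * (j`!)%:R) <= abs (N%:R : K).
Proof.
elim: j => [|j IH] hj; first by rewrite ffactn0 fact0 expr0 mul1r subrr abs0 abs_ge0.
have e2 : ((N.-1 - j)%N%:R : K) = N%:R - (j.+1)%:R.
  have -> : (N.-1 - j = N - j.+1)%N by lia.
  by rewrite natrB //; lia.
set Q := ((N.-1) ^_ j)%:R : K; set Rj := (-1) ^+ j * (j`!)%:R : K.
have -> : (((N.-1) ^_ j.+1)%:R - (-1) ^+ j.+1 * (j.+1`!)%:R : K)
    = (Q - Rj) * (N%:R - (j.+1)%:R) + Rj * N%:R.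
  by rewrite ffactnSr natrM e2 /Q /Rj factS natrM exprS; ring.
apply: abs_add_le; rewrite absM.
  rewrite -[X in _ <= X]mulr1; apply: ler_pM; rewrite ?abs_ge0 ?IH //; first lia.
  by rewrite -e2 abs_nat_le1.
rewrite -[X in _ <= X]mul1r; apply: ler_wpM2r; first exact: abs_ge0.
by rewrite /Rj absM abs_sign mul1r abs_nat_le1.
Qed.

Lemma binomial_log_term_diff (t : K) N i : (i < N)%N ->
  t ^+ i.+1 *+ 'C(N, i.+1) / N%:R - log_term (1 + t) i.+1 =
  exp_term t i.+1 * (((N.-1) ^_ i)%:R - (-1) ^+ i * (i`!)%:R).
Proof.
move=> iN.
have N0 : (N%:R : K) != 0 by apply: natK_neq0; lia.
have i0 : ((i.+1)%:R : K) != 0 by apply: natK_neq0.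
have f0 := factK_neq0 i.
have eC : ('C(N, i.+1)%:R : K) = N%:R * ('C(N.-1, i))%:R / (i.+1)%:R.
  by rewrite -natrM mul_bin_diag natrM mulrC mulKf.
rewrite -bin_ffact /log_term /exp_term (_ : 1 + t - 1 = t); last by ring.
rewrite -mulr_natr eC factS !natrM.
have -> : (-1) ^+ i.+2 = (-1) ^+ i :> K by rewrite !exprS mulrA mulrNN mulr1 mul1r.
field; rewrite f0 N0 andbT (_ : 1 + i%:R = (i.+1)%:R) ?i0 //; by rewrite -natr1 addrC.
Qed.

Lemma log_partial_approx y N : small (y - 1) -> (0 < N)%N ->
  abs ((y ^+ N - 1) / N%:R - log_partial y N.+1) <= abs (N%:R : K).
Proof.
move=> ht N0; set t := y - 1.
have ey : y = 1 + t by rewrite /t addrC subrK.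
have -> : y ^+ N - 1 = \sum_(1 <= j < N.+1) t ^+ j *+ 'C(N, j).
  rewrite ey exprDn -(big_mkord xpredT (fun j => 1 ^+ (N - j) * t ^+ j *+ 'C(N, j))).
  rewrite big_nat_recl // bin0 subn0 expr0 expr1n !mul1r mulr1n [1 + _]addrC addrK big_add1.
  by apply: eq_bigr => j _; rewrite expr1n mul1r.
rewrite /log_partial big_distrl /= -sumrB big_nat_cond.
apply: abs_sum_le => [|j /andP [/andP [j1 j2] _]]; first exact: abs_ge0.
case: j j1 j2 => [//|i] _ hi.
rewrite ey -/t binomial_log_term_diff; last lia.
rewrite absM -[X in _ <= X]mul1r; apply: ler_pM; rewrite ?abs_ge0 ?exp_term_le1 //.
by apply: abs_ffact_pred_sub; lia.
Qed.

Lemma abs_expr5_sub1 u : small (u - 1) -> abs (u ^+ 5 - 1) = c5 * abs (u - 1).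
Proof.
move=> hu; set h := u - 1.
have hl1 := small_abs_lt1 hu; have h0 := abs_ge0 h.
set w := 2%:R * h + 2%:R * h ^+ 2 + h ^+ 3.
have -> : u ^+ 5 - 1 = 5%:R * h * (1 + w) + h ^+ 5.
  by rewrite /w /h; ring.
have hw : abs w < 1.
  have a2 : abs (2%:R : K) <= 1 by apply: abs_nat_le1.
  have hh2 : abs (h ^+ 2) <= abs h by rewrite absX expr2; nra.
  have hh3 : abs (h ^+ 3) <= abs h.
    by rewrite absX exprS; have := exprn_ile1 2 h0 (ltW hl1); have := exprn_ge0 2 h0; nra.
  apply: le_lt_trans hl1; apply: abs_add_le; [apply: abs_add_le|by []].
    by rewrite absM; have := abs_ge0 (2%:R : K); nra.
  by rewrite absM; have := abs_ge0 (2%:R : K); have := abs_ge0 (h ^+ 2); nra.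
have aw : abs (1 + w) = 1 by rewrite abs_add_isosceles abs1.
have a5 : abs (5%:R * h * (1 + w)) = c5 * abs h by rewrite !absM aw abs5 mulr1.
have [->|hnz] := eqVneq h 0; first by rewrite expr0n /= addr0 mulr0 mul0r abs0 mulr0.
have hp : 0 < abs h by rewrite lt_def abs_ge0 andbT; apply/eqP => /abs_eq0; apply/eqP.
rewrite -a5 abs_add_isosceles // absX a5.
have c0 := c5_gt0; have c1 := c5_lt1.
have -> : abs h ^+ 5 = abs h * (abs h ^+ 2) ^+ 2 by rewrite -exprM -exprS.
rewrite mulrC ltr_pM2r //; apply: le_lt_trans (_ : c5 ^+ 2 < c5).
  by apply: lerXn2r; rewrite ?nnegrE ?exprn_ge0 ?abs_ge0 //; exact: ltW.
by rewrite expr2; nra.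
Qed.

Lemma abs_expr_expn5_sub1 u k : small (u - 1) ->
  abs (u ^+ (5 ^ k) - 1) = c5 ^+ k * abs (u - 1).
Proof.
move=> hu; elim: k => [|k IH]; first by rewrite expn0 expr1 expr0 mul1r.
have hk : small (u ^+ (5 ^ k) - 1).
  by apply: small_le hu; rewrite IH ler_piMl ?abs_ge0 ?c5_expn_le1.
by rewrite expnS mulnC exprM abs_expr5_sub1 // IH exprS mulrA.
Qed.

Definition log_approx (y : K) (k : nat) : K := (y ^+ (5 ^ k) - 1) / (5 ^ k)%:R.

Lemma abs_expn5 k : abs ((5 ^ k)%:R : K) = c5 ^+ k.
Proof. by rewrite abs_natE ?expn_gt0 // pfactorK. Qed.

Lemma abs_log_approx y k : small (y - 1) -> abs (log_approx y k) = abs (y - 1).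
Proof.
move=> ht; rewrite abs_div abs_expr_expn5_sub1 // abs_expn5 mulrC mulKf //.
by rewrite expf_neq0 // lt0r_neq0 ?c5_gt0.
Qed.

Lemma log_approx_close y L k eps : small (y - 1) -> cvg_to abs (log_partial y) L ->
  c5 ^+ k <= eps -> (forall n, (5 ^ k < n)%N -> abs (log_term y n) <= eps) ->
  abs (L - log_approx y k) <= eps.
Proof.
move=> ht hL ck tail.
have -> : L - log_approx y k =
    - (log_partial y (5 ^ k).+1 - L) + - (log_approx y k - log_partial y (5 ^ k).+1).
  by ring.
apply: abs_add_le; rewrite absN.
  apply: series_tail_le (log_partialS y) _ _ _ _ tail hL.
  by apply: le_trans ck; rewrite exprn_ge0 // ltW // c5_gt0.
by apply: le_trans (log_partial_approx ht (expn_gt0 5 k)) _; rewrite abs_expn5.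
Qed.

Lemma expK_log_approx y k : small (y - 1) -> abs (expK (log_approx y k) - y) <= c5 ^+ k.
Proof.
move=> ht; set N := (5 ^ k)%N; set Lk := log_approx y k; set s := y ^+ N - 1.
have ay := small_sub1_abs ht; have y0 := abs_eq1_neq0 ay.
have yN0 : y ^+ N != 0 by rewrite expf_neq0.
have aLk : abs Lk = abs (y - 1) := abs_log_approx k ht.
have hLk : small Lk by rewrite /small aLk.
have as_ : abs s = c5 ^+ k * abs (y - 1) by rewrite /s /N abs_expr_expn5_sub1.
have hs : small s by apply: small_le ht; rewrite as_ ler_piMl ?abs_ge0 ?c5_expn_le1.
have Es : expK s = expK Lk ^+ N.
  by rewrite -expKMn // /Lk /log_approx mulrC divfK ?natK_neq0 ?expn_gt0.
set u := expK Lk / y.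
have hu : small (u - 1).
  apply: small_le ht.
  have -> : u - 1 = ((expK Lk - 1) - (y - 1)) / y by rewrite /u; field.
  by rewrite abs_div ay divr1; apply: abs_sub_le => //; rewrite -aLk expK_sub1_le.
have uN : u ^+ N - 1 = (expK s - (1 + s)) / y ^+ N.
  by rewrite (_ : 1 + s = y ^+ N) /u ?exprMn -?Es ?exprVn; [field | rewrite /s; ring].
have bnd : c5 ^+ k * abs (u - 1) <= c5 ^+ k * (c5 ^+ k * c5).
  rewrite -abs_expr_expn5_sub1 // uN abs_div absX ay expr1n divr1.
  apply: le_trans (expK_sub_lin_le hs) _.
  rewrite as_ exprMn mulrA -expr2 ler_wpM2l //.
  by rewrite !exprn_ge0 // ltW // c5_gt0.
have -> : expK Lk - y = (u - 1) * y by rewrite /u mulrBl divfK // mul1r.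
rewrite absM ay mulr1; move: bnd; rewrite ler_pM2l ?exprn_gt0 ?c5_gt0 // => bnd.
by apply: le_trans bnd _; rewrite ler_piMr ?exprn_ge0 ?ltW ?c5_gt0 ?c5_lt1.
Qed.

Lemma expK_log y L : small (y - 1) -> cvg_to abs (log_partial y) L -> expK L = y.
Proof.
move=> ht hL; apply/eqP; rewrite -subr_eq0; apply/eqP; apply: abs_le_all_eq0 => eps e0.
have [k1 Hk1] := c5_expn_lt_eventually e0; have [M HM] := log_term_null ht e0.
set k := maxn k1 M.
have ck : c5 ^+ k <= eps by apply/ltW/Hk1; rewrite leq_maxl.
have close : abs (L - log_approx y k) <= eps.
  apply: log_approx_close ht hL ck _ => n hn; apply/ltW/HM.
  by have := ltn_expl k (isT : (1 < 5)%N); have := leq_maxr k1 M; lia.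
have hL2 : small L := small_le (log_lim_le ht hL) ht.
have hLk : small (log_approx y k) by rewrite /small abs_log_approx.
have -> : expK L - y = (expK L - expK (log_approx y k)) + (expK (log_approx y k) - y) by ring.
apply: abs_add_le; first exact: le_trans (expK_lipschitz hL2 hLk) close.
exact: le_trans (expK_log_approx k ht) ck.
Qed.

Lemma sinh_partial_exp z N :
  sinh_partial z N = (exp_partial z (2 * N) - exp_partial (- z) (2 * N)) / 2%:R.
Proof.
elim: N => [|N IH]; first by rewrite muln0 /sinh_partial big_ord0 !exp_partial0 subrr mul0r.
rewrite /sinh_partial big_ord_recr /= -/(sinh_partial z N) IH.
have -> : (2 * N.+1 = (2 * N).+2)%N by lia.
rewrite !exp_partialS /exp_term.
have e1 : (- z) ^+ (2 * N) = z ^+ (2 * N) by rewrite exprNn exprM sqrrN expr1n expr1n mul1r.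
have e2 : (- z) ^+ (2 * N).+1 = - z ^+ (2 * N).+1 by rewrite exprS e1 exprS mulNr.
rewrite e1 e2; have t2 : (2%:R : K) != 0 by apply: natK_neq0.
by field; rewrite t2 !factK_neq0.
Qed.

Lemma sinh_partial_cvg z : small z ->
  cvg_to abs (sinh_partial z) ((expK z - expK (- z)) / 2%:R).
Proof.
move=> hz; have le2n n : (n <= 2 * n)%N by lia.
have hz' : small (- z) by rewrite smallN.
apply: (cvg_eq_eventually (N0 := 0%N) _ (cvgM (cvgD (cvg_subseq le2n (expK_cvg hz))
  (cvgN (cvg_subseq le2n (expK_cvg hz')))) (cvg_cst (2%:R^-1)))).
by move=> n _; rewrite sinh_partial_exp.
Qed.

Lemma in_Z5_abs_le1 x : in_Z5 abs x -> abs x <= 1.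
Proof.
move=> hx; have [z hz] := hx 1 ltr01.
by rewrite -(subrK z%:~R x); apply: abs_add_le (ltW hz) (abs_int_le1 z).
Qed.

Lemma sqrt5_neq0 (phi : K) : phi ^+ 2 = phi + 1 -> 2%:R * phi - 1 != 0.
Proof.
move=> hphi; apply/eqP => e; have := abs_sqrt5_sqr hphi.
by rewrite e abs0 expr0n /= => c0; move: c5_gt0; rewrite -c0 ltxx.
Qed.

Lemma fib_sinh_log (phi omega : K) : phi ^+ 2 = phi + 1 -> omega ^+ 2 = -1 ->
  small (phi / omega - 1) ->
  exists L : K,
    cvg_to abs (log_partial (phi / omega)) L /\
    forall x : K, in_Z5 abs x ->
      exists s : K,
        cvg_to abs (sinh_partial (x * L)) s /\
        forall n : nat, x = n%:R ->
          2%:R / (2%:R * phi - 1) * s = (fib n)%:R / omega ^+ n.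
Proof.
move=> hphi hom hy; set y := phi / omega.
have [L hL] := log_series_cvg hy; exists L; split => // x hx.
have smallL : small L := small_le (log_lim_le hy hL) hy.
have hxL : small (x * L).
  by apply: small_le smallL; rewrite absM ler_piMl ?abs_ge0 ?in_Z5_abs_le1.
eexists; split; first exact: sinh_partial_cvg hxL.
move=> n ->; have hnL : small (n%:R * L) := small_le (abs_natmul_le n L) smallL.
have yn0 : y ^+ n != 0 by apply/expf_neq0/abs_eq1_neq0/small_sub1_abs.
have En : expK (n%:R * L) = y ^+ n by rewrite expKMn // (expK_log hy hL).
have Em : expK (- (n%:R * L)) = (y ^+ n)^-1.
  by apply: (mulIf yn0); rewrite mulVf // -{1}En expKN_mul.
have t0 : (2%:R : K) != 0 by apply: natK_neq0.
rewrite En Em (fib_div_expr n hphi hom (sqrt5_neq0 hphi)) -/y.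
by field; rewrite sqrt5_neq0 // yn0 t0.
Qed.

End FiveAdic.

Unset Implicit Arguments.
Set Strict Implicit.

Theorem corollary5p3 (R : realFieldType) (K : fieldType) (abs : K -> R)
  (phi omega : K)
  (habs : is_nonarch_abs abs)
  (hcompl : complete_abs abs)
  (h5 : abs 5%:R = 5%:R^-1)
  (hphi : phi ^+ 2 = phi + 1)
  (hdense : forall (y : K) (eps : R), 0 < eps ->
      exists a b : rat, abs (y - (ratr a + ratr b * phi)) < eps)
  (homega4 : omega ^+ 4 = 1)
  (homega3 : abs (omega - 3%:R) <= abs (2%:R * phi - 1)) :
  exists L : K,
    cvg_to abs (log_partial (phi / omega)) L /\
    forall x : K, in_Z5 abs x ->
      exists s : K,
        cvg_to abs (sinh_partial (x * L)) s /\
        forall n : nat, x = n%:R ->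
          2%:R / (2%:R * phi - 1) * s = (fib n)%:R / omega ^+ n.
Proof.
case: habs => abs_ge0 abs_eq0 absM abs_ultra.
have [hom aphi aom hy] :=
  omega_phi_facts abs_ge0 abs_eq0 absM abs_ultra h5 hphi homega4 homega3.
have c5_vanishes :=
  c5_expn_small abs_ge0 abs_eq0 absM abs_ultra h5 hphi aphi hom aom hdense.
exact: (fib_sinh_log abs_ge0 abs_eq0 absM abs_ultra h5 c5_vanishes hcompl hphi hom hy).
Qed.
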